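(* Let $G$ be a compact Hausdorff abelian group with Haar probability measure $\mu$, and let $B$ be a $K$-analytic subset of $G$. Then for all non-negative integers $m,n$ we have \[\mu(mB-nB)=\sup_{D\subset B,\ D\text{ compact}}\mu(mD-nD).\]
   Context: A subset $S$ of a topological space $Y$ is a $K_{\sigma\delta}$ set if $S=\bigcap_{i\in\mathbb{N}}\bigcup_{j\in\mathbb{N}}K_{i,j}$ for compact sets $K_{i,j}\subset Y$. A subset $A$ of a Hausdorff space $X$ is $K$-analytic if there is a $K_{\sigma\delta}$ set $S$ in some Hausdorff space and a continuous map $f:S\to X$ with $A=f(S)$ ($K$-analytic subsets of $G$ are Haar measurable, and sums/differences of $K$-analytic sets are $K$-analytic). $mB-nB=\{b_1+\dots+b_m-b_1'-\dots-b_n':b_i,b_j'\in B\}$, with an empty sum equal to $0$. *)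

From HB Require Import structures.
From mathcomp Require Import all_boot all_order all_algebra.
From mathcomp Require Import all_classical all_reals all_analysis.
Set Implicit Arguments. Unset Strict Implicit. Unset Printing Implicit Defensive.
Import Order.TTheory GRing.Theory Num.Theory.
Local Open Scope classical_set_scope.
Local Open Scope ring_scope.

Definition borel_set (T : topologicalType) (A : set T) : Prop :=
  <<s [set U | open U] >> A.

(* A Radon (regular) Borel probability measure, given as a set function whose
   values are only relevant on Borel sets *)
Definition radon_probability (R : realType) (T : topologicalType)
    (mu : set T -> \bar R) : Prop :=
  [/\ mu set0 = 0%E,
      (forall A, borel_set A -> (0 <= mu A)%E),
      (forall F : nat -> set T, (forall k, borel_set (F k)) -> trivIset setT F ->
         (fun n => \sum_(0 <= k < n) mu (F k))%E @ \oo --> mu (\bigcup_k F k)) &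
    [/\ mu setT = 1%E,
      (forall A, borel_set A ->
         mu A = ereal_inf [set mu U | U in [set U | open U /\ A `<=` U]]) &
      (forall U, open U ->
         mu U = ereal_sup [set mu K | K in [set K | compact K /\ K `<=` U]])]].

Definition haar_probability (R : realType) (G : topologicalZmodType)
    (mu : set G -> \bar R) : Prop :=
  radon_probability mu /\
  (forall (g : G) (A : set G), borel_set A -> mu [set g + x | x in A] = mu A).

(* The (completed) Haar measure of an arbitrary set, computed as the outer
   measure; on Haar measurable sets it coincides with the completion of mu. *)
Definition haar_outer (R : realType) (G : topologicalZmodType)
    (mu : set G -> \bar R) (A : set G) : \bar R :=
  ereal_inf [set mu U | U in [set U | borel_set U /\ A `<=` U]].

Definition K_sigma_delta (Y : topologicalType) (S : set Y) : Prop :=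
  exists K : nat -> nat -> set Y, (forall i j, compact (K i j)) /\
    S = \bigcap_i \bigcup_j K i j.

Definition K_analytic (X : topologicalType) (A : set X) : Prop :=
  exists (Y : topologicalType) (S : set Y) (f : Y -> X),
    [/\ hausdorff_space Y, K_sigma_delta S, {within S, continuous f} &
        A = f @` S].

Fixpoint msum (G : zmodType) (m : nat) (B : set G) : set G :=
  match m with
  | 0%N => [set 0]
  | k.+1 => [set x + b | x in msum k B & b in B]
  end.

Definition sumdiff (G : zmodType) (m n : nat) (B : set G) : set G :=
  [set x - y | x in msum m B & y in msum n B].

From Pilot Require Import Defs.
From HB Require Import structures.
From mathcomp Require Import all_boot all_order all_algebra.
From mathcomp Require Import all_classical all_reals all_analysis.
Import Order.TTheory GRing.Theory Num.Theory.
Local Open Scope classical_set_scope.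
Local Open Scope ring_scope.

(* Choquet's capacitability argument for the set function
   Psi A = haar_outer mu (mA - nA).  Psi is continuous along nondecreasing
   unions, because A |-> mA - nA commutes with them and the outer measure of a
   Radon measure is continuous from below.  Psi is upper semicontinuous at
   compact sets: if the sets A_k eventually lie in every neighbourhood of a
   compact D, then by Wallace's theorem and the continuity of addition the sets
   mA_k - nA_k eventually lie in every neighbourhood of the compact set
   mD - nD, so outer regularity gives Psi D >= inf_k Psi A_k.  Now write
   B = f(S) with S = \bigcap_i \bigcup_j K_ij and t < Psi B.  Continuity from
   below lets one choose j_0, j_1, ... one at a time so that Psi stays above t
   on f(S `&` K_0j_0 `&` ... `&` K_kj_k); these sets shrink to the compact image
   D of \bigcap_k K_kj_k, which lies in B, so Psi D >= t. *)

Section borel_sets.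
Context {T : topologicalType}.
Implicit Types A B : set T.

Lemma borel_open A : open A -> borel_set A.
Proof. exact: sub_sigma_algebra. Qed.

Lemma borel_bigcup (F : nat -> set T) :
  (forall n, borel_set (F n)) -> borel_set (\bigcup_n F n).
Proof. exact: sigma_algebra_bigcup. Qed.

Lemma borelC A : borel_set A -> borel_set (~` A).
Proof. by rewrite -setTD; exact: sigma_algebraCD. Qed.

Lemma borelT : borel_set [set: T].
Proof. by rewrite -setC0; apply: borelC; exact: sigma_algebra0. Qed.

Lemma borelU A B : borel_set A -> borel_set B -> borel_set (A `|` B).
Proof.
move=> bA bB; rewrite -bigcup2E; apply: borel_bigcup => -[|[|n]] //=.
exact: sigma_algebra0.
Qed.

Lemma borelD A B : borel_set A -> borel_set B -> borel_set (A `\` B).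
Proof.
move=> bA bB; rewrite setDE -[A]setCK -setCU.
by apply: borelC; apply: borelU => //; exact: borelC.
Qed.

Lemma borel_bigcap (F : nat -> set T) :
  (forall n, borel_set (F n)) -> borel_set (\bigcap_n F n).
Proof.
move=> bF; rewrite -[X in borel_set X]setCK setC_bigcap.
by apply: borelC; apply: borel_bigcup => n; exact: borelC.
Qed.

End borel_sets.

Section radon_probability.
Context {R : realType} {T : topologicalType} {mu : set T -> \bar R}.
Hypothesis hmu : radon_probability mu.
Local Open Scope ereal_scope.

Lemma radon_ge0 (A : set T) : borel_set A -> 0 <= mu A.
Proof. by case: hmu => _ + _ _; apply. Qed.

Lemma radonU (A B : set T) : borel_set A -> borel_set B ->
  A `&` B = set0 -> mu (A `|` B) = mu A + mu B.
Proof.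
case: hmu => mu0 _ mu_sigma _ bA bB; rewrite trivIset_bigcup2 => AB0.
have bAB k : borel_set (bigcup2 A B k).
  by case: k => [|[|k]] //=; exact: sigma_algebra0.
rewrite -bigcup2E; apply: (cvg_unique (@ereal_hausdorff R) (mu_sigma _ bAB AB0)).
apply: cvg_near_cst; exists 2%N => // -[|[|n]] //= _.
by rewrite big_nat_recl // big_nat_recl // big1 ?adde0.
Qed.

Lemma le_radon (A B : set T) : borel_set A -> borel_set B ->
  A `<=` B -> mu A <= mu B.
Proof.
move=> bA bB AB; have bBA : borel_set (B `\` A) by exact: borelD.
rewrite -(setDUK AB) radonU //; first by rewrite leeDl // radon_ge0.
by rewrite setDE setICA setICr setI0.
Qed.

Lemma nondecreasing_cvg_radon (F : nat -> set T) :
  (forall n, borel_set (F n)) -> nondecreasing_seq F ->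
  mu \o F @ \oo --> mu (\bigcup_n F n).
Proof.
move=> bF ndF; have bD n : borel_set (seqD F n).
  by case: n => [|n] //=; exact: borelD.
suff -> : mu \o F = (fun n => \sum_(0 <= k < n.+1) mu (seqD F k)).
  rewrite -eq_bigcup_seqD (cvg_shiftS (fun n => \sum_(0 <= k < n) mu (seqD F k))).
  by case: hmu => _ _ mu_sigma _; apply: mu_sigma => //; exact: trivIset_seqD.
apply/funext; elim=> [|n IHn] /=; first by rewrite big_nat1.
rewrite big_nat_recr //= -IHn -radonU //; first by rewrite -setU_seqD.
- exact: borelD.
- by rewrite setDE setICA setICr setI0.
Qed.

End radon_probability.

Section haar_outer.
Context {R : realType} {G : topologicalZmodType} {mu : set G -> \bar R}.
Local Open Scope ereal_scope.

Lemma le_haar_outer (A B : set G) :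
  A `<=` B -> haar_outer mu A <= haar_outer mu B.
Proof.
move=> AB; apply: ereal_inf_le_tmp => _ [U [bU BU] <-].
by exists U => //; split => //; exact: subset_trans BU.
Qed.

Lemma haar_outer_le {A U : set G} :
  borel_set U -> A `<=` U -> haar_outer mu A <= mu U.
Proof. by move=> bU AU; apply: ereal_inf_lbound; exists U. Qed.

Hypothesis hmu : radon_probability mu.

Lemma haar_outer_fin_num (A : set G) : haar_outer mu A \is a fin_num.
Proof.
have A0 : 0 <= haar_outer mu A.
  by apply: le_ereal_inf_tmp => _ [U [bU _] <-]; exact: radon_ge0.
have A1 : haar_outer mu A <= 1.
  by case: hmu => _ _ _ [<- _ _]; apply: haar_outer_le => //; exact: borelT.
by rewrite ge0_fin_numE // (le_lt_trans A1) ?ltry.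
Qed.

Lemma haar_outer_nondecreasing_le (A : nat -> set G) (c : \bar R) :
  nondecreasing_seq A -> (forall n, haar_outer mu (A n) <= c) ->
  haar_outer mu (\bigcup_n A n) <= c.
Proof.
move=> ndA Ac; have /fin_numPlt/andP[ltNyA _] := haar_outer_fin_num (A 0%N).
case: c Ac => [c| |] Ac; last 2 first.
- by rewrite leey.
- by have := lt_le_trans ltNyA (Ac 0%N); rewrite ltxx.
apply/lee_addgt0Pr => e e0.
have /choice[H HP] : forall n, exists U,
    [/\ borel_set U, A n `<=` U & mu U < c%:E + e%:E].
  move=> n; have /ereal_inf_lt[_ [U [bU AU] <-] ?] :
    haar_outer mu (A n) < c%:E + e%:E by rewrite (le_lt_trans (Ac n)) // lteDl.
  by exists U.
pose H' k := \bigcap_j H (j + k)%N.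
have bH' k : borel_set (H' k) by apply: borel_bigcap => j; case: (HP (j + k)%N).
have ndH' : nondecreasing_seq H'.
  move=> k l kl; apply/subsetPset => x H'x j _.
  by rewrite -(subnK kl) addnA; exact: H'x.
have AH' k : A k `<=` H' k.
  move=> x Akx j _; have [_ + _] := HP (j + k)%N; apply.
  by have /subsetPset := ndA k (j + k)%N (leq_addl _ _); apply.
have bUH' : borel_set (\bigcup_k H' k) by exact: borel_bigcup.
apply: (le_trans (haar_outer_le bUH' _)).
  by move=> x [k _ /AH' ?]; exists k.
have mu_cvg := nondecreasing_cvg_radon hmu _ bH' ndH'.
rewrite -(cvg_lim _ mu_cvg) //; apply: lime_le; first exact: cvgP mu_cvg.
apply: nearW => k /=; have [bHk _ /ltW] := HP k; apply: le_trans.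
by apply: le_radon => // x /(_ 0%N I).
Qed.

End haar_outer.

Definition shrinks_into {X : topologicalType} (A : nat -> set X) (D : set X) :=
  forall U, set_nbhs D U -> \forall k \near \oo, A k `<=` U.

Lemma near_set_nbhs_compact {I : Type} {Y : topologicalType}
    (F : set_system I) {PF : ProperFilter F} (E : set Y) (P : I -> Y -> Prop) :
  compact E -> (forall y, E y -> \forall y' \near y & i \near F, P i y') ->
  \forall i \near F & y \near (set_nbhs E : set_system Y), P i y.
Proof.
move=> /compact_near_coveringP cE PE.
(* Covering by sets N of indices rather than by indices makes the
   neighbourhood of E uniform in i over some N in F. *)
have : \forall N \near powerset_filter_from F,
    set_nbhs E (fun y => forall i, N i -> P i y).
  apply: (cE _ _ (fun N y => \forall y' \near y, forall i, N i -> P i y')).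
  move=> y /PE[[V A] /= []]; rewrite nbhsE => -[V' [oV' V'y] V'V] FA VAP.
  exists (V', [set N | F N /\ N `<=` A]); first split.
  - exact: open_nbhs_nbhs.
  - exact: powerset_filter_fromP.
  move=> [y' N] /= [V'y' [_ NA]]; have nV' : nbhs y' V' by exact: open_nbhs_nbhs.
  apply: filterS nV' => y'' V'y'' i /NA Ai.
  by apply: (VAP (y'', i)); split => //; exact: V'V.
case/near_powerset_filter_fromP => [N M NM|A FA nA].
  by apply: filterS => y MP i /NM; exact: MP.
by exists (A, fun y => forall i, A i -> P i y) => // -[i y] [/= Ai]; apply.
Qed.

(* Wallace's theorem *)
Lemma set_nbhs_setX {X Y : topologicalType} {D : set X} {E : set Y}
    {W : set (X * Y)} :
  compact D -> compact E -> set_nbhs (D `*` E) W ->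
  \forall x \near (set_nbhs D : set_system X) &
    y \near (set_nbhs E : set_system Y), W (x, y).
Proof.
move=> cD cE DEW; have [->|D0] := eqVneq D set0.
  by exists (set0, setT); [split => //; exact: filterT | case=> ? ? []].
have PF : ProperFilter (set_nbhs D) by apply: set_nbhs_pfilter; exact/set0P.
apply: near_set_nbhs_compact => // y Ey.
apply: near_set_nbhs_compact => // x Dx.
have [[U V] /= UV UVW] := DEW (x, y) (conj Dx Ey).
by exists (U, V) => // -[a b] /= ?; exact: (UVW (a, b)).
Qed.

Lemma shrinks_into_setX {X Y : topologicalType} {A : nat -> set X}
    {B : nat -> set Y} {D : set X} {E : set Y} :
  compact D -> compact E -> shrinks_into A D -> shrinks_into B E ->
  shrinks_into (fun k => A k `*` B k) (D `*` E).
Proof.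
move=> cD cE AD BE W /(set_nbhs_setX cD cE)[[U V] /= [DU EV] UVW].
apply: filterS2 (AD _ DU) (BE _ EV) => k AU BV [x y] [/AU Ux /BV Vy].
exact: (UVW (x, y)).
Qed.

Lemma shrinks_into_image {X Y : topologicalType} {S : set X} {f : X -> Y}
    {A : nat -> set X} {D : set X} :
  {within S, continuous f} -> D `<=` S -> shrinks_into A D ->
  shrinks_into (fun k => f @` (S `&` A k)) (f @` D).
Proof.
move=> fc DS AD W fDW.
have : set_nbhs D (fun x => S x -> W (f x)).
  move=> x Dx; have := (subspace_continuousP S f).1 fc x (DS x Dx) W.
  by rewrite nbhs_simpl; apply; apply: fDW; exists x.
by move=> /AD; apply: filterS => k AW _ [x [Sx /AW]] /(_ Sx) ? <-.
Qed.

Lemma shrinks_into_bigcap {X : topologicalType} {C : nat -> set X} :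
  (forall k, closed (C k)) -> nonincreasing_seq C -> compact (C 0%N) ->
  shrinks_into C (\bigcap_k C k).
Proof.
move=> cC niC /compact_near_coveringP cC0 U CU.
have : \forall k \near \oo, C 0%N `<=` (fun x => C k x -> U x).
  apply: (cC0 _ _ (fun k x => C k x -> U x)) => x _.
  have [Cx|/existsNP[j /not_implyP[_ Cjx]]] := pselect ((\bigcap_k C k) x).
    exists (U, setT); first by split; [exact: CU | exact: filterT].
    by move=> [y k] [/= Uy _].
  exists (~` C j, [set k | (j <= k)%N]) => [|[y k] [/= Cjy jk] Cky]; last first.
    by have /subsetPset/(_ y Cky)/Cjy := niC j k jk.
  split; last by exists j.
  by apply: open_nbhs_nbhs; split => //; exact: closed_openC.
apply: filterS => k C0U x Ckx; apply: (C0U x _ Ckx).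
by have /subsetPset/(_ x Ckx) := niC 0%N k (leq0n k).
Qed.

Lemma image2_setX {X Y Z : Type} (h : X -> Y -> Z) (A : set X) (B : set Y) :
  [set h x y | x in A & y in B] = (fun p => h p.1 p.2) @` (A `*` B).
Proof. by rewrite image2E; congr (_ @` _); apply/funext => -[]. Qed.

Lemma image2_bigcup {X Y Z : Type} (h : X -> Y -> Z) (A : nat -> set X)
    (B : nat -> set Y) : nondecreasing_seq A -> nondecreasing_seq B ->
  [set h x y | x in \bigcup_k A k & y in \bigcup_k B k] =
  \bigcup_k [set h x y | x in A k & y in B k].
Proof.
move=> ndA ndB; apply/seteqP; split; last first.
  move=> _ [k _ [x Akx [y Bky <-]]].
  by exists x; [exists k | exists y; [exists k|]].
move=> _ [x [i _ Aix] [y [j _ Bjy] <-]]; exists (maxn i j) => //.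
exists x; first by have /subsetPset := ndA _ _ (leq_maxl i j); apply.
by exists y => //; have /subsetPset := ndB _ _ (leq_maxr i j); apply.
Qed.

Section image2.
Context {X Y Z : topologicalType} (h : X -> Y -> Z).
Hypothesis hc : continuous (fun p : X * Y => h p.1 p.2).

Lemma compact_image2 {D : set X} {E : set Y} :
  compact D -> compact E -> compact [set h x y | x in D & y in E].
Proof.
move=> cD cE; rewrite image2_setX; apply: continuous_compact.
  exact: continuous_subspaceT.
exact: compact_setX.
Qed.

Lemma shrinks_into_image2 {A : nat -> set X} {B : nat -> set Y} {D E} :
  compact D -> compact E -> shrinks_into A D -> shrinks_into B E ->
  shrinks_into (fun k => [set h x y | x in A k & y in B k])
               [set h x y | x in D & y in E].
Proof.
move=> cD cE AD BE; rewrite image2_setX => W.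
have hcT : {within setT, continuous (fun p : X * Y => h p.1 p.2)}.
  exact: continuous_subspaceT.
move/(shrinks_into_image hcT (@subsetT _ _) (shrinks_into_setX cD cE AD BE)).
by apply: filterS => k; rewrite setTI image2_setX.
Qed.

End image2.

(* [msum] alone would denote the sum of measures of mathcomp-analysis. *)
Section sumsets.
Context {G : zmodType}.
Implicit Types (A B : set G) (m n : nat).

Lemma msumS m A B : A `<=` B -> Defs.msum m A `<=` Defs.msum m B.
Proof. by move=> AB; elim: m => [//|m IHm] /=; exact: image2_subset. Qed.

Lemma sumdiffS m n A B : A `<=` B -> sumdiff m n A `<=` sumdiff m n B.
Proof. by move=> AB; apply: image2_subset; exact: msumS. Qed.

Lemma msum_nondecreasing m (A : nat -> set G) :
  nondecreasing_seq A -> nondecreasing_seq (fun k => Defs.msum m (A k)).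
Proof. by move=> ndA p q pq; apply/subsetPset/msumS/subsetPset/ndA. Qed.

Lemma msum_bigcup m (A : nat -> set G) : nondecreasing_seq A ->
  Defs.msum m (\bigcup_k A k) = \bigcup_k Defs.msum m (A k).
Proof.
move=> ndA; elim: m => [|m IHm] /=.
  by apply/seteqP; split=> [z z0|z [_ _ ->]] //; exists 0%N.
by rewrite IHm image2_bigcup //; exact: msum_nondecreasing.
Qed.

Lemma sumdiff_bigcup m n (A : nat -> set G) : nondecreasing_seq A ->
  sumdiff m n (\bigcup_k A k) = \bigcup_k sumdiff m n (A k).
Proof.
by move=> ndA; rewrite /sumdiff !msum_bigcup // image2_bigcup //;
  exact: msum_nondecreasing.
Qed.

End sumsets.

Section topological_sumsets.
Context {G : topologicalZmodType}.
Implicit Types (D : set G) (m n : nat).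

Lemma compact_msum m D : compact D -> compact (Defs.msum m D).
Proof.
move=> cD; elim: m => [|m IHm] /=; first exact: compact_set1.
exact: (compact_image2 +%R add_continuous IHm cD).
Qed.

Lemma shrinks_into_msum m (A : nat -> set G) D : compact D ->
  shrinks_into A D -> shrinks_into (fun k => Defs.msum m (A k)) (Defs.msum m D).
Proof.
move=> cD AD; elim: m => [|m IHm] /=.
  by move=> U /(_ 0 erefl)/nbhs_singleton U0; apply: nearW => k x ->.
exact: (shrinks_into_image2 +%R add_continuous (compact_msum m D cD) cD IHm AD).
Qed.

Lemma shrinks_into_sumdiff m n (A : nat -> set G) D : compact D ->
  shrinks_into A D -> shrinks_into (fun k => sumdiff m n (A k)) (sumdiff m n D).
Proof.
move=> cD AD; rewrite /sumdiff.
by apply: (shrinks_into_image2 _ (@sub_continuous G));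
  [exact: compact_msum | exact: compact_msum | exact: shrinks_into_msum
  | exact: shrinks_into_msum].
Qed.

End topological_sumsets.

Lemma K_sigma_delta_nondecreasing {Y : topologicalType} {S : set Y} :
  K_sigma_delta S -> exists K : nat -> nat -> set Y,
    [/\ forall i j, compact (K i j), forall i, nondecreasing_seq (K i) &
        S = \bigcap_i \bigcup_j K i j].
Proof.
move=> [K [cK ->]]; exists (fun i j => \big[setU/set0]_(l < j.+1) K i l); split.
- by move=> i j; apply: bigsetU_compact => l _; exact: cK.
- by move=> i p q pq; apply/subsetPset/subset_bigsetU.
- by congr (\bigcap_i _); apply/funext => i; rewrite bigcup_bigsetU_bigcup.
Qed.

Section K_sigma_delta_descending.
Context {R : realType} {Y : topologicalType} {K : nat -> nat -> set Y}.
Hypotheses (hY : hausdorff_space Y) (cK : forall i j, compact (K i j))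
  (ndK : forall i, nondecreasing_seq (K i)).
Let S := \bigcap_i \bigcup_j K i j.
Context {Phi : set Y -> \bar R}.
Hypothesis Phi_nondecreasing : forall (A : nat -> set Y) c, nondecreasing_seq A ->
  (forall n, (Phi (A n) <= c)%E) -> (Phi (\bigcup_n A n) <= c)%E.
Local Open Scope ereal_scope.

Let refine_step t k C : t < Phi (S `&` C) ->
  exists j, t < Phi (S `&` (K k j `&` C)).
Proof.
move=> tC; apply: contrapT => /forallNP jt; move: tC; apply/negP; rewrite -leNgt.
rewrite (_ : S `&` C = \bigcup_j (S `&` (K k j `&` C))); last first.
  apply/seteqP; split=> [x [Sx Cx]|x [j _ [Sx [_ Cx]]] //].
  by have [j _ Kx] := Sx k I; exists j.
apply: Phi_nondecreasing => [p q pq|j]; last by rewrite leNgt; apply/negP/jt.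
by apply/subsetPset; apply: setIS; apply: setSI; apply/subsetPset/ndK.
Qed.

Lemma K_sigma_delta_descending t : t < Phi S ->
  exists C : nat -> set Y, [/\ forall k, compact (C k), nonincreasing_seq C,
    \bigcap_k C k `<=` S & forall k, t < Phi (S `&` C k)].
Proof.
move=> tS.
have /choice[J HJ] : forall kC : nat * set Y, exists j,
    t < Phi (S `&` kC.2) -> t < Phi (S `&` (K kC.1 j `&` kC.2)).
  move=> [k C]; have [/(refine_step t k)[j]|] := pselect (t < Phi (S `&` C)).
    by exists j.
  by exists 0%N.
(* B k.+1 = K k j_k `&` ... `&` K 0 j_0 with j_i = J (i, B i) *)
pose fix B k := if k is k.+1 then K k (J (k, B k)) `&` B k else setT.
have clB k : closed (B k).
  elim: k => [|k IHk] /=; first exact: closedT.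
  by apply: compact_closed => //; exact: compact_closedI.
exists (fun k => B k.+1); split.
- by move=> k; exact: compact_closedI.
- by apply/nonincreasing_seqP => k; apply/subsetPset => x [].
- by move=> x Bx i _; have [/= Kx _] := Bx i I; exists (J (i, B i)).
- suff tB k : t < Phi (S `&` B k) by [].
  by elim: k => [|k IHk]; [rewrite setIT | exact: (HJ (k, B k))].
Qed.

End K_sigma_delta_descending.

Theorem K_analytic_capacitable {R : realType} {X : topologicalType}
    (Psi : set X -> \bar R) (B : set X) (t : \bar R) :
  (forall (A : nat -> set X) c, nondecreasing_seq A ->
    (forall n, (Psi (A n) <= c)%E) -> (Psi (\bigcup_n A n) <= c)%E) ->
  (forall (A : nat -> set X) D s, compact D -> shrinks_into A D ->
    (forall k, (s <= Psi (A k))%E) -> (s <= Psi D)%E) ->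
  K_analytic B -> (t < Psi B)%E ->
  exists D, [/\ compact D, D `<=` B & (t <= Psi D)%E].
Proof.
move=> Psi_nondecreasing Psi_shrinks [Y [S [f [hY SK fc ->]]]] tB.
have [K [cK ndK eS]] := K_sigma_delta_nondecreasing SK.
pose Phi C := Psi (f @` C).
have Phi_nondecreasing : forall (A : nat -> set Y) c, nondecreasing_seq A ->
    (forall n, (Phi (A n) <= c)%E) -> (Phi (\bigcup_n A n) <= c)%E.
  move=> A c ndA Ac; rewrite /Phi image_bigcup.
  apply: Psi_nondecreasing => // p q pq.
  by apply/subsetPset/image_subset/subsetPset/ndA.
rewrite eS in tB; have [C [cC niC CS tC]] :=
  K_sigma_delta_descending hY cK ndK Phi_nondecreasing _ tB.
rewrite -eS in CS tC.
have clC k : closed (C k) by exact: compact_closed.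
have cD : compact (f @` \bigcap_k C k).
  apply: continuous_compact; first exact: continuous_subspaceW fc.
  apply: subclosed_compact (cC 0%N) _; first exact: closed_bigI.
  exact: bigcap_inf.
exists (f @` \bigcap_k C k); split => //; first exact: image_subset.
apply: (Psi_shrinks (fun k => f @` (S `&` C k))) cD _ (fun k => ltW (tC k)).
exact: shrinks_into_image fc CS (shrinks_into_bigcap clC niC (cC 0%N)).
Qed.

Section haar_outer_sumdiff.
Context {R : realType} {G : topologicalZmodType} {mu : set G -> \bar R}.
Hypothesis hmu : radon_probability mu.
Local Open Scope ereal_scope.

Lemma haar_outer_shrinks (A : nat -> set G) (D : set G) (t : \bar R) :
  shrinks_into A D -> (forall k, t <= haar_outer mu (A k)) ->
  t <= haar_outer mu D.
Proof.
move=> AD tA; apply: le_ereal_inf_tmp => _ [V [bV DV] <-].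
case: hmu => _ _ _ [_ mu_outer _]; rewrite (mu_outer V bV).
apply: le_ereal_inf_tmp => _ [W [oW VW] <-].
near \oo => k.
apply: le_trans (tA k) (haar_outer_le (borel_open _ oW) _).
near: k; apply: AD => x /DV/VW Wx; exact: open_nbhs_nbhs.
Unshelve. all: by end_near.
Qed.

Variables m n : nat.

Lemma haar_outer_sumdiff_nondecreasing_le (A : nat -> set G) (c : \bar R) :
  nondecreasing_seq A -> (forall k, haar_outer mu (sumdiff m n (A k)) <= c) ->
  haar_outer mu (sumdiff m n (\bigcup_k A k)) <= c.
Proof.
move=> ndA Ac; rewrite sumdiff_bigcup //.
apply: haar_outer_nondecreasing_le => // p q pq.
by apply/subsetPset/sumdiffS/subsetPset/ndA.
Qed.

Lemma haar_outer_sumdiff_shrinks (A : nat -> set G) (D : set G) (t : \bar R) :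
  compact D -> shrinks_into A D ->
  (forall k, t <= haar_outer mu (sumdiff m n (A k))) ->
  t <= haar_outer mu (sumdiff m n D).
Proof.
by move=> cD AD; apply: haar_outer_shrinks => //; exact: shrinks_into_sumdiff.
Qed.

End haar_outer_sumdiff.

Theorem lemma4p3 (R : realType) (G : topologicalZmodType)
  (hG : hausdorff_space G) (cG : compact [set: G])
  (mu : set G -> \bar R) (hmu : haar_probability mu)
  (B : set G) (hB : K_analytic B) (m n : nat) :
  haar_outer mu (sumdiff m n B) =
  ereal_sup [set haar_outer mu (sumdiff m n D) |
              D in [set D : set G | D `<=` B /\ compact D]].
Proof.
have [hr _] := hmu.
apply/eqP; rewrite eq_le; apply/andP; split; last first.
  apply: ge_ereal_sup => _ [D [DB _] <-].
  by apply: le_haar_outer; exact: sumdiffS.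
apply/lee_addgt0Pr => e e0; rewrite -leeBlDr //.
pose Psi A := haar_outer mu (sumdiff m n A).
have [|D [cD DB eD]] := K_analytic_capacitable Psi B (Psi B - e%:E)
  (haar_outer_sumdiff_nondecreasing_le hr m n)
  (haar_outer_sumdiff_shrinks hr m n) hB.
  by rewrite lteBlDr // lteDl ?lte_fin //; exact: haar_outer_fin_num.
by apply: le_trans eD (ereal_sup_ubound _); exists D.
Qed.
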